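(* Let $Q:(-\infty,-1)\to(-\infty,0)$ be the inverse of the strictly increasing function $G\mapsto G-e^G$ on $(-\infty,0)$, and define $R:\mathbb{R}\to\mathbb{R}$ by $R(V)=-2(1-e^{Q(V)})^2$ for $V<-1$ and $R(V)=4(V+1)$ for $V\ge -1$. Fix $m<-1$. For $n\in\mathbb{R}$ let $V(t;n)$ denote the unique solution of $V''+3V'=R(V)$, $t>0$, $V(0)=m$, $V'(0)=n$ (prime denoting $d/dt$, $V_t=dV/dt$). Define $\beta^0=\{n\in\mathbb{R}: V_t(t;n)>0 \text{ and } V(t;n)\le -1 \text{ for all } t>0\}$. If $n\in\beta^0$, then $V(t;n)\to -1$ as $t\to\infty$. *)

From Stdlib Require Import Reals.
From Coquelicot Require Import Coquelicot.
Open Scope R_scope.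

(* The nonlinearity R of the paper, parameterized by the function Q
   (the inverse of G |-> G - exp G on (-oo,0)), which the theorem
   characterizes by hypothesis. *)
Definition Rnl (Q : R -> R) (V : R) : R :=
  if Rlt_dec V (-1) then -2 * (1 - exp (Q V)) ^ 2 else 4 * (V + 1).

(* V is nondecreasing and bounded above by -1, so it suffices that it gets
   arbitrarily close to -1.  If it stayed below -1 - eps, then R(V) would stay
   below a negative constant, and V'' <= R(V) would drive V' to negative values,
   contradicting V' > 0. *)

From Stdlib Require Import Reals Lra Psatz Classical.
From Coquelicot Require Import Coquelicot.
Open Scope R_scope.

Lemma MVT_pos (f df : R -> R) (a b : R) :
  (forall t, 0 < t -> is_derive f t (df t)) -> 0 < a -> a <= b ->
  exists c, a <= c <= b /\ f b - f a = df c * (b - a).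
Proof.
  intros Hd Ha Hab.
  destruct (MVT_gen f a b df) as [c [Hc Heq]].
  - intros x Hx. apply Hd. rewrite Rmin_left in Hx by lra. lra.
  - intros x Hx. rewrite Rmin_left in Hx by lra.
    apply continuity_pt_filterlim.
    apply (ex_derive_continuous (K := R_AbsRing) (V := R_NormedModule)).
    exists (df x). apply Hd. lra.
  - exists c. rewrite Rmin_left, Rmax_right in Hc by lra. auto.
Qed.

Lemma nondecreasing_of_derive_pos (f df : R -> R) :
  (forall t, 0 < t -> is_derive f t (df t)) -> (forall t, 0 < t -> 0 < df t) ->
  forall a b, 0 < a -> a <= b -> f a <= f b.
Proof.
  intros Hd Hpos a b Ha Hab.
  destruct (MVT_pos f df a b Hd Ha Hab) as [c [Hc E]].
  pose proof (Hpos c ltac:(lra)). nra.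
Qed.

Lemma derive_le_neg_eventually_nonpos (f df : R -> R) (k : R) :
  (forall t, 0 < t -> is_derive f t (df t)) -> (forall t, 0 < t -> df t <= - k) ->
  0 < k -> exists t, 0 < t /\ f t <= 0.
Proof.
  intros Hd Hneg Hk.
  set (T := 1 + Rabs (f 1) / k).
  assert (HT : 1 <= T).
  { unfold T. assert (0 <= Rabs (f 1) / k) by (apply Rdiv_le_0_compat; [apply Rabs_pos | lra]). lra. }
  exists T. split; [lra |].
  destruct (MVT_pos f df 1 T Hd ltac:(lra) HT) as [c [Hc E]].
  pose proof (Hneg c ltac:(lra)).
  assert (Hdrop : k * (T - 1) = Rabs (f 1)) by (unfold T; field; lra).
  pose proof (Rle_abs (f 1)). nra.
Qed.

Lemma is_lim_nondecreasing_bounded (f : R -> R) (L : R) :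
  (forall a b, 0 < a -> a <= b -> f a <= f b) -> (forall t, 0 < t -> f t <= L) ->
  (forall eps, 0 < eps -> exists t, 0 < t /\ L - eps < f t) ->
  is_lim f p_infty L.
Proof.
  intros Hmono Hbound Hclose.
  apply is_lim_spec. intros eps. simpl.
  destruct (Hclose eps (cond_pos eps)) as [t0 [Ht0 Hft0]].
  exists t0. intros y Hy.
  pose proof (Hbound y ltac:(lra)). pose proof (Hmono t0 y Ht0 ltac:(lra)).
  apply Rabs_def1; lra.
Qed.

(* The inequality [(1 - q) e^q < 1], i.e. [1 - q < e^(-q)], is what makes the
   bound uniform in [q]. *)
Lemma one_sub_exp_sqr_ge (q eps : R) :
  q < 0 -> 0 < eps -> q - exp q <= -1 - eps ->
  Rmin (1/4) (eps/2) <= (1 - exp q) ^ 2.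
Proof.
  intros Hq He Hv.
  set (x := exp q) in *.
  assert (Hx0 : 0 < x) by apply exp_pos.
  assert (Hx1 : x < 1).
  { unfold x. rewrite <- exp_0. apply exp_increasing. lra. }
  assert (Hinv : 1 - q < / x).
  { unfold x. rewrite <- exp_Ropp. replace (1 - q) with (1 + - q) by ring.
    apply exp_ineq1. lra. }
  assert (Hprod : (1 - q) * x < 1).
  { apply Rmult_lt_compat_r with (r := x) in Hinv; auto.
    rewrite Rinv_l in Hinv by lra. lra. }
  assert (Hsq : (1 - x) ^ 2 >= eps * x) by nra.
  destruct (Rle_dec x (1/2)).
  - pose proof (Rmin_l (1/4) (eps/2)). nra.
  - pose proof (Rmin_r (1/4) (eps/2)). nra.
Qed.

Lemma Rnl_le_neg (Q : R -> R)
  (hQ : forall v, v < -1 -> Q v < 0 /\ Q v - exp (Q v) = v)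
  (eps v : R) : 0 < eps -> v <= -1 - eps ->
  Rnl Q v <= -2 * Rmin (1/4) (eps/2).
Proof.
  intros He Hv. unfold Rnl. destruct (Rlt_dec v (-1)) as [Hl | Hl]; [| lra].
  destruct (hQ v Hl) as [Hq Heq].
  pose proof (one_sub_exp_sqr_ge (Q v) eps Hq He ltac:(lra)). lra.
Qed.

Theorem lemma4p4
  (Q : R -> R)
  (hQ : forall v, v < -1 -> Q v < 0 /\ Q v - exp (Q v) = v)
  (m n : R) (hm : m < -1)
  (V W : R -> R)  (* W plays the role of V_t *)
  (hV0 : V 0 = m) (hW0 : W 0 = n)
  (hVc0 : filterlim V (at_right 0) (locally m))
  (hWc0 : filterlim W (at_right 0) (locally n))
  (hVd : forall t, 0 < t -> is_derive V t (W t))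
  (hWd : forall t, 0 < t -> is_derive W t (Rnl Q (V t) - 3 * W t))
  (hbeta : forall t, 0 < t -> W t > 0 /\ V t <= -1) :
  is_lim V p_infty (-1).
Proof.
  apply is_lim_nondecreasing_bounded.
  - apply (nondecreasing_of_derive_pos V W hVd). intros t Ht. apply hbeta, Ht.
  - intros t Ht. apply hbeta, Ht.
  - intros eps He. apply NNPP. intros Hfar.
    assert (Hbelow : forall t, 0 < t -> V t <= -1 - eps).
    { intros t Ht. apply Rnot_lt_le. intros Hlt. apply Hfar. exists t. lra. }
    assert (Hk : 0 < 2 * Rmin (1/4) (eps/2)) by (apply Rmin_case; lra).
    destruct (derive_le_neg_eventually_nonpos W _ (2 * Rmin (1/4) (eps/2)) hWd)
      as [t [Ht HWt]]; [| exact Hk |].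
    + intros t Ht. pose proof (Rnl_le_neg Q hQ eps (V t) He (Hbelow t Ht)).
      destruct (hbeta t Ht). lra.
    + destruct (hbeta t Ht). lra.
Qed.
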